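(* For each notion of guarding $\mathfrak{g}$ and $\sigma$-structures $\mathcal{A}, \mathcal{B}$, there is a bijective correspondence between (1) coKleisli morphisms, i.e. $\sigma$-homomorphisms, $\mathbb{G}^{\mathfrak{g}} \mathcal{A} \to \mathcal{B}$, and (2) winning strategies for Duplicator in the $\mathfrak{g}$-guarded simulation game from $\mathcal{A}$ to $\mathcal{B}$. Thus $\mathcal{A} \preceq^{\mathfrak{g}} \mathcal{B}$ iff there is a homomorphism $\mathbb{G}^{\mathfrak{g}} \mathcal{A} \to \mathcal{B}$.
   Context: A notion of guarding $\mathfrak{g}$ is atom, loose, or clique guarding; a subset of a $\sigma$-structure is $\mathfrak{g}$-guarded if contained in the support of a tuple satisfying a $\mathfrak{g}$-guard. $\mathbb{G}^{\mathfrak{g}}\mathcal{A}$ is the $\sigma$-structure whose universe consists of equivalence classes $[p,a]$ of focussed plays $\langle p,a\rangle$, where $p=[U_1,\ldots,U_n]$ is a non-empty list of $\mathfrak{g}$-guarded sets of $\mathcal{A}$ and $a \in U_n = \lambda(p)$; $\langle p,a\rangle \sim \langle q,a'\rangle$ iff $a=a'$, the greatest common prefix $p\sqcap q$ is non-empty, and $a$ lies in the last element of every play on the prefix-order paths from $p \sqcap q$ to $p$ and to $q$. Relations: $R^{\mathbb{G}\mathcal{A}} = \{([p,a_1],\ldots,[p,a_r]) \mid R^{\mathcal{A}}(a_1,\ldots,a_r)\}$. The $\mathfrak{g}$-guarded simulation game from $\mathcal{A}$ to $\mathcal{B}$: set $X_0 = \varnothing$, $\varphi_0 = \varnothing$;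 in round $n+1$ Spoiler picks a $\mathfrak{g}$-guarded set $X_{n+1}$ in $\mathcal{A}$, and Duplicator must respond with a $\mathfrak{g}$-guarded set $Y_{n+1}$ in $\mathcal{B}$ and a partial homomorphism $\varphi_{n+1} : X_{n+1} \to Y_{n+1}$ agreeing with $\varphi_n$ on $X_{n+1}\cap X_n$. Duplicator wins if he can always respond. $\mathcal{A} \preceq^{\mathfrak{g}} \mathcal{B}$ means Duplicator has a winning strategy. *)

From Stdlib Require Import List.
Import ListNotations.
Set Implicit Arguments.

Record signature := Signature { sym : Type; ar : sym -> nat }.

Record structure (S : signature) := Structure {
  carrier :> Type;
  rel : sym S -> list carrier -> Prop;
  rel_ar : forall s t, rel s t -> length t = ar S s }.
Arguments rel {S} _ _ _.

Definition hom (S : signature) (M N : structure S) : Type :=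
  { f : M -> N | forall s t, rel M s t -> rel N s (map f t) }.

Inductive guarding := AtomG | LooseG | CliqueG.

(* a tuple satisfying an atom (a relation atom, or an equality atom x = x) *)
Definition atom_tuple (S : signature) (M : structure S) (t : list M) : Prop :=
  (exists s, rel M s t) \/ (exists a, t = [a; a]).

Definition pairs_covered (T : Type) (a : list T) (ts : list (list T)) : Prop :=
  forall x y, In x a -> In y a -> exists t, In t ts /\ In x t /\ In y t.

Definition sat_guard (S : signature) (M : structure S) (g : guarding)
    (a : list M) : Prop :=
  match g with
  | AtomG => atom_tuple M a
  | LooseG => exists ts : list (list M),
      Forall (atom_tuple M) ts /\ Forall (fun t => incl t a) ts /\
      pairs_covered a ts
  | CliqueG => exists (b : list M) (ts : list (list M)),
      Forall (atom_tuple M) ts /\ Forall (fun t => incl t (a ++ b)) ts /\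
      pairs_covered a ts
  end.

Definition guarded (S : signature) (M : structure S) (g : guarding)
    (X : M -> Prop) : Prop :=
  exists a : list M, sat_guard M g a /\ forall x, X x -> In x a.

Definition is_play (S : signature) (g : guarding) (A : structure S)
    (p : list (A -> Prop)) : Prop :=
  p <> [] /\ Forall (guarded A g) p.

Definition lastset (T : Type) (p : list (T -> Prop)) : T -> Prop :=
  last p (fun _ => False).

Record fplay (S : signature) (g : guarding) (A : structure S) := FPlay {
  fp_play : list (A -> Prop);
  fp_pt : A;
  fp_isplay : is_play g A fp_play;
  fp_foc : lastset fp_play fp_pt }.

Definition prefix (T : Type) (r s : list T) : Prop := exists u, s = r ++ u.

Definition is_gcp (T : Type) (r p q : list T) : Prop :=
  prefix r p /\ prefix r q /\
  forall r', prefix r' p -> prefix r' q -> prefix r' r.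

Definition fequiv (S : signature) (g : guarding) (A : structure S)
    (x y : fplay g A) : Prop :=
  fp_pt x = fp_pt y /\
  exists r, is_gcp r (fp_play x) (fp_play y) /\ r <> [] /\
    (forall s, prefix r s -> prefix s (fp_play x) -> lastset s (fp_pt x)) /\
    (forall s, prefix r s -> prefix s (fp_play y) -> lastset s (fp_pt x)).

Definition GU (S : signature) (g : guarding) (A : structure S) : Type :=
  { C : fplay g A -> Prop | exists x, C = fequiv x }.

Definition cls (S : signature) (g : guarding) (A : structure S)
    (x : fplay g A) : GU g A :=
  exist _ (fequiv x) (ex_intro _ x eq_refl).

Definition Grel (S : signature) (g : guarding) (A : structure S)
    (s : sym S) (t : list (GU g A)) : Prop :=
  exists (p : list (A -> Prop)) (xs : list (fplay g A)),
    Forall (fun x => fp_play x = p) xs /\ rel A s (map (@fp_pt _ _ _) xs) /\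
    t = map (@cls _ _ _) xs.

Lemma Grel_ar (S : signature) (g : guarding) (A : structure S) :
  forall s t, @Grel S g A s t -> length t = ar S s.
Proof.
  intros s t [p [xs [_ [H E]]]]. subst t.
  apply rel_ar in H. rewrite length_map in *. exact H.
Qed.

Definition Gcom (S : signature) (g : guarding) (A : structure S) : structure S :=
  @Structure S (GU g A) (@Grel S g A) (@Grel_ar S g A).

Definition play (S : signature) (g : guarding) (A : structure S) : Type :=
  { p : list (A -> Prop) | is_play g A p }.

(* A (deterministic) Duplicator strategy: after Spoiler's moves
   p = [X_1,...,X_n], a map phi_n : X_n -> B. *)
Definition dstrategy (S : signature) (g : guarding) (A B : structure S) : Type :=
  forall p : play g A, { a : A | lastset (proj1_sig p) a } -> B.

Definition winning (S : signature) (g : guarding) (A B : structure S)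
    (st : dstrategy g A B) : Prop :=
  (forall p : play g A,
     (exists Y : B -> Prop, guarded B g Y /\ forall a, Y (st p a)) /\
     (forall s (t : list { a : A | lastset (proj1_sig p) a }),
        rel A s (map (@proj1_sig _ _) t) -> rel B s (map (st p) t))) /\
  (forall (p p' : play g A) (X : A -> Prop) (a : A)
          (h : lastset (proj1_sig p) a) (h' : lastset (proj1_sig p') a),
     proj1_sig p' = proj1_sig p ++ [X] ->
     st p' (exist _ a h') = st p (exist _ a h)).

Definition simulates (S : signature) (g : guarding) (A B : structure S) : Prop :=
  exists st : dstrategy g A B, winning st.

(* A homomorphism [G A -> B] and a Duplicator strategy both assign a response to each
   point [a] of the last move of a play [p]. The coherence condition of the game says
   the response is unchanged when a move containing [a] is appended; chaining such steps
   from the greatest common prefix shows that it is constant on ~-classes, and conversely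
   appending such a move does not change [[p, a]]. Relations of [G A] live on a single
   play, so the homomorphism condition is the partial-homomorphism condition. What is
   left is that the responses land in a guarded set of [B]: the last move lies in the
   support of a guard tuple [a]; append [a] as a move, and then each atom [t] of [A] as
   a further move. The responses on these plays send atoms to atoms and agree on the
   points that stay, so they carry the guard [a] to a guard in [B]. *)

From Stdlib Require Import List Classical ClassicalEpsilon FunctionalExtensionality
  PropExtensionality ProofIrrelevance.
Import ListNotations.
Set Implicit Arguments.

Definition extend {T U : Type} {P : T -> Prop} (f : forall x, P x -> U) (u0 : U)
    (x : T) : U :=
  match excluded_middle_informative (P x) with
  | left H => f x H
  | right _ => u0
  end.

Lemma extend_eq {T U : Type} {P : T -> Prop} (f : forall x, P x -> U) u0 x (H : P x) :
  extend f u0 x = f x H.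
Proof.
  unfold extend. destruct (excluded_middle_informative (P x)) as [H'|]; [|contradiction].
  f_equal. apply proof_irrelevance.
Qed.

Lemma Forall_sig {T : Type} (P : T -> Prop) (l : list T) :
  Forall P l -> exists ls : list {x | P x}, map (@proj1_sig _ _) ls = l.
Proof.
  induction 1 as [|x l Hx _ [ls E]].
  - now exists [].
  - exists (exist P x Hx :: ls). cbn. congruence.
Qed.

Lemma lastset_snoc {T : Type} (p : list (T -> Prop)) X : lastset (p ++ [X]) = X.
Proof. apply last_last. Qed.

Section Prefix.
Context {T : Type}.
Implicit Types p q r s : list T.

Lemma prefix_refl p : prefix p p.
Proof. exists []. now rewrite app_nil_r. Qed.

Lemma prefix_app r u : prefix r (r ++ u).
Proof. now exists u. Qed.

Lemma prefix_nil p : prefix [] p.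
Proof. now exists p. Qed.

Lemma prefix_trans p q r : prefix p q -> prefix q r -> prefix p r.
Proof. intros [u ->] [v ->]. exists (u ++ v). now rewrite app_assoc. Qed.

Lemma prefix_cons x r p : prefix r p -> prefix (x :: r) (x :: p).
Proof. intros [u ->]. now exists u. Qed.

Lemma prefix_cons_inv z x r p : prefix (z :: r) (x :: p) -> z = x /\ prefix r p.
Proof. intros [u E]. injection E as -> E. split; [reflexivity|now exists u]. Qed.

Lemma prefix_nonnil r s : prefix r s -> r <> [] -> s <> [].
Proof. intros [u ->] Hr E. now apply app_eq_nil in E as [? _]. Qed.

Lemma prefix_total r r' s : prefix r s -> prefix r' s -> prefix r r' \/ prefix r' r.
Proof.
  intros [u ->] [u' E].
  destruct (app_eq_app _ _ _ _ E) as [l [[-> _]|[-> _]]]; [right|left]; apply prefix_app.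
Qed.

Lemma prefix_antisym p s : prefix p s -> prefix s p -> s = p.
Proof.
  intros [u ->] [v E]. rewrite <- app_assoc in E.
  assert (Huv : u ++ v = []) by (apply (app_inv_head p); now rewrite app_nil_r).
  apply app_eq_nil in Huv as [-> _]. apply app_nil_r.
Qed.

Lemma prefix_snoc_inv p s z : prefix p s -> prefix s (p ++ [z]) -> s = p \/ s = p ++ [z].
Proof.
  intros [u ->] [v E]. rewrite <- app_assoc in E. apply app_inv_head in E.
  symmetry in E. apply app_eq_unit in E as [[-> _]|[-> _]].
  - left. apply app_nil_r.
  - now right.
Qed.

Lemma is_gcp_nil p q :
  (forall z r, prefix (z :: r) p -> prefix (z :: r) q -> False) -> is_gcp [] p q.
Proof.
  intro Hdisj. split; [apply prefix_nil|split; [apply prefix_nil|]].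
  intros [|z r] Hp Hq; [apply prefix_refl|exfalso; exact (Hdisj z r Hp Hq)].
Qed.

Lemma gcp_exists p q : exists r, is_gcp r p q.
Proof.
  revert q. induction p as [|x p IH]; intros [|y q].
  1-3: exists []; apply is_gcp_nil; intros z r [u1 E1] [u2 E2]; discriminate.
  destruct (classic (x = y)) as [<-|Hxy].
  - destruct (IH q) as [r [Hp [Hq Hmax]]]. exists (x :: r).
    split; [now apply prefix_cons|split; [now apply prefix_cons|]].
    intros [|z r'] H1 H2; [apply prefix_nil|].
    apply prefix_cons_inv in H1 as [-> H1], H2 as [_ H2]. apply prefix_cons. auto.
  - exists []. apply is_gcp_nil. intros z r H1 H2.
    apply prefix_cons_inv in H1 as [-> _], H2 as [E _]. contradiction.
Qed.

End Prefix.

(* The path condition of [fequiv], which unfolds to two instances of it. *)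
Definition stays {T : Type} (a : T) (r p : list (T -> Prop)) : Prop :=
  forall s, prefix r s -> prefix s p -> lastset s a.

Section Stays.
Context {T : Type} (a : T).
Implicit Types p q r : list (T -> Prop).

Lemma stays_prefix_l r r' p : prefix r r' -> stays a r p -> stays a r' p.
Proof. intros Hr H s H1 H2. exact (H s (prefix_trans Hr H1) H2). Qed.

Lemma stays_prefix_r r p p' : prefix p p' -> stays a r p' -> stays a r p.
Proof. intros Hp H s H1 H2. exact (H s H1 (prefix_trans H2 Hp)). Qed.

(* [r2] is where [p] branches off [q]: the path from [r1] to [p] runs along [q]
   up to [r2] and then along the path from [r2] to [p]. *)
Lemma stays_branch r1 r2 q p :
  prefix r2 q -> prefix r2 p -> stays a r1 q -> stays a r2 p -> stays a r1 p.
Proof.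
  intros Hq Hp H1 H2 s Hs Hsp.
  destruct (prefix_total Hp Hsp) as [Hr2s|Hsr2].
  - exact (H2 s Hr2s Hsp).
  - exact (H1 s Hs (prefix_trans Hsr2 Hq)).
Qed.

End Stays.

Section Plays.
Context {S : signature} {g : guarding} {A : structure S}.

Lemma is_play_prefix r q : is_play g A q -> prefix r q -> r <> [] -> is_play g A r.
Proof. intros [_ H] [u ->] Hr. split; [exact Hr|]. now apply Forall_app in H. Qed.

Lemma is_play_snoc p X : is_play g A p -> guarded A g X -> is_play g A (p ++ [X]).
Proof.
  intros [_ Hp] HX. split.
  - intro E. now apply app_eq_nil in E as [_ E].
  - apply Forall_app. auto.
Qed.

Lemma guarded_lastset p : is_play g A p -> guarded A g (lastset p).
Proof.
  intros [Hne Hp]. destruct (exists_last Hne) as [p' [X ->]].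
  rewrite lastset_snoc. apply Forall_app in Hp as [_ HX]. now inversion HX.
Qed.

Lemma FPlay_eq p q a b Hp Hq Ha Hb :
  p = q -> a = b -> @FPlay S g A p a Hp Ha = @FPlay S g A q b Hq Hb.
Proof. intros -> ->. f_equal; apply proof_irrelevance. Qed.

Lemma fequiv_refl (x : fplay g A) : fequiv x x.
Proof.
  split; [reflexivity|]. exists (fp_play x).
  split; [split; [apply prefix_refl|split; [apply prefix_refl|auto]]|].
  split; [apply (fp_isplay x)|].
  assert (H : stays (fp_pt x) (fp_play x) (fp_play x)).
  { intros s H1 H2. rewrite (prefix_antisym H1 H2). apply fp_foc. }
  split; exact H.
Qed.

Lemma fequiv_sym (x y : fplay g A) : fequiv x y -> fequiv y x.
Proof.
  intros [e [r [[Hx [Hy Hmax]] [Hne [Sx Sy]]]]]. split; [auto|].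
  exists r. split; [split; [exact Hy|split; [exact Hx|auto]]|].
  rewrite <- e. auto.
Qed.

Lemma fequiv_trans (x y z : fplay g A) : fequiv x y -> fequiv y z -> fequiv x z.
Proof.
  intros [e1 [r1 [[Hx1 [Hy1 _]] [Hne1 [Sx1 Sy1]]]]]
         [e2 [r2 [[Hy2 [Hz2 _]] [Hne2 [Sy2 Sz2]]]]].
  rewrite <- e1 in Sy2, Sz2.
  split; [congruence|].
  destruct (gcp_exists (fp_play x) (fp_play z)) as [r3 [Hx3 [Hz3 Hmax3]]].
  exists r3. split; [split; [exact Hx3|split; [exact Hz3|exact Hmax3]]|].
  destruct (prefix_total Hy1 Hy2) as [H12|H21].
  - assert (H13 : prefix r1 r3) by exact (Hmax3 r1 Hx1 (prefix_trans H12 Hz2)).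
    split; [exact (prefix_nonnil H13 Hne1)|split].
    + exact (stays_prefix_l H13 Sx1).
    + exact (stays_prefix_l H13 (stays_branch Hy2 Hz2 Sy1 Sz2)).
  - assert (H23 : prefix r2 r3) by exact (Hmax3 r2 (prefix_trans H21 Hx1) Hz2).
    split; [exact (prefix_nonnil H23 Hne2)|split].
    + exact (stays_prefix_l H23 (stays_branch Hy1 Hx1 Sy2 Sx1)).
    + exact (stays_prefix_l H23 Sz2).
Qed.

Lemma cls_eq (x y : fplay g A) : fequiv x y -> cls x = cls y.
Proof.
  intro H. apply subset_eq_compat. apply functional_extensionality. intro z.
  apply propositional_extensionality. split; intro K.
  - exact (fequiv_trans (fequiv_sym H) K).
  - exact (fequiv_trans H K).
Qed.

Lemma cls_snoc p X a Hp Hp' Ha Ha' :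
  cls (@FPlay S g A p a Hp Ha) = cls (@FPlay S g A (p ++ [X]) a Hp' Ha').
Proof.
  apply cls_eq. split; [reflexivity|]. exists p. cbn.
  split; [split; [apply prefix_refl|split; [apply prefix_app|auto]]|].
  split; [apply Hp|split].
  - intros s H1 H2. now rewrite (prefix_antisym H1 H2).
  - intros s H1 H2. now destruct (prefix_snoc_inv _ H1 H2) as [->| ->].
Qed.

Lemma GU_cls (C : GU g A) : exists x, C = cls x.
Proof. destruct C as [C [x ->]]. exists x. now apply subset_eq_compat. Qed.

End Plays.

Section Guards.
Context {S : signature}.

Lemma sat_guard_atom (M : structure S) g t : atom_tuple M t -> sat_guard M g t.
Proof.
  intro Ht. assert (Hcov : pairs_covered t [t]) by (intros x y Hx Hy; exists t; cbn; auto).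
  destruct g; cbn.
  - exact Ht.
  - exists [t]. split; [now constructor|split; [|exact Hcov]].
    constructor; [apply incl_refl|constructor].
  - exists [], [t]. split; [now constructor|split; [|exact Hcov]].
    constructor; [rewrite app_nil_r; apply incl_refl|constructor].
Qed.

Lemma sat_guard_nil_of_rel (M : structure S) g s : rel M s [] -> sat_guard M g [].
Proof.
  intro Hs. destruct g; cbn.
  - left. now exists s.
  - exists []. repeat constructor. intros x y [].
  - exists [], []. repeat constructor. intros x y [].
Qed.

Lemma sat_guard_nil_transfer (M N : structure S) g :
  (forall s, rel M s [] -> rel N s []) -> sat_guard M g [] -> sat_guard N g [].
Proof.
  intro Hrel. destruct g; intro H.
  - destruct H as [[s Hs]|[x E]]; [|discriminate]. left; exists s; exact (Hrel s Hs).
  - exists []. repeat constructor. intros x y [].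
  - exists [], []. repeat constructor. intros x y [].
Qed.

(* Guards are transferred along [f] on the support [a] of the guard, even if each
   atom [t] only maps to an atom under its own function [ft t], as long as [ft t]
   agrees with [f] on [t] inside [a]. *)
Section Transfer.
Variables (M N : structure S) (f : M -> N) (ft : list M -> M -> N) (a : list M).
Hypothesis ft_atom : forall t, atom_tuple M t -> atom_tuple N (map (ft t) t).
Hypothesis ft_agree : forall t x, atom_tuple M t -> In x t -> In x a -> ft t x = f x.

Let image (ts : list (list M)) : list (list N) := map (fun t => map (ft t) t) ts.

Lemma map_ft_incl t : atom_tuple M t -> incl t a -> map (ft t) t = map f t.
Proof. intros Ht Hta. apply map_ext_in. intros x Hx. exact (ft_agree _ Ht Hx (Hta x Hx)). Qed.

Lemma atoms_image ts : Forall (atom_tuple M) ts -> Forall (atom_tuple N) (image ts).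
Proof. intro Hts. apply Forall_map. exact (Forall_impl _ ft_atom Hts). Qed.

Lemma pairs_covered_image ts :
  Forall (atom_tuple M) ts -> pairs_covered a ts -> pairs_covered (map f a) (image ts).
Proof.
  intros Hts Hcov x' y' Hx Hy. rewrite Forall_forall in Hts.
  apply in_map_iff in Hx as [x [<- Hx]], Hy as [y [<- Hy]].
  destruct (Hcov x y Hx Hy) as [t [Ht [Hxt Hyt]]].
  exists (map (ft t) t). split; [now apply in_map with (f := fun t => map (ft t) t)|].
  rewrite <- (ft_agree _ (Hts t Ht) Hxt Hx), <- (ft_agree _ (Hts t Ht) Hyt Hy).
  split; now apply in_map.
Qed.

Lemma sat_guard_transfer g : sat_guard M g a -> sat_guard N g (map f a).
Proof.
  destruct g; cbn.
  - intro Ha. rewrite <- (map_ft_incl Ha (incl_refl a)). exact (ft_atom Ha).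
  - intros [ts [Hat [Hincl Hcov]]]. exists (image ts).
    split; [exact (atoms_image Hat)|split; [|exact (pairs_covered_image Hat Hcov)]].
    apply Forall_map. rewrite Forall_forall in Hat, Hincl |- *. intros t Ht.
    rewrite map_ft_incl by auto. apply incl_map. auto.
  - intros [b [ts [Hat [_ Hcov]]]]. exists (concat (image ts)), (image ts).
    split; [exact (atoms_image Hat)|split; [|exact (pairs_covered_image Hat Hcov)]].
    apply Forall_forall. intros t' Ht'. apply incl_appr. intros z Hz.
    apply in_concat. eauto.
Qed.

End Transfer.
End Guards.

Section Correspondence.
Context {S : signature} {g : guarding} {A B : structure S}.

(* [phi [P, y]], or the junk value [b0] when [P] is not a play or [y] is not in its
   last move. *)
Definition at_play (phi : GU g A -> B) (b0 : B) (P : list (A -> Prop)) : A -> B :=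
  extend (fun y (H : is_play g A P /\ lastset P y) => phi (cls (FPlay y (proj1 H) (proj2 H))))
    b0.

Lemma at_play_eq phi b0 P y HP Hy : at_play phi b0 P y = phi (cls (@FPlay S g A P y HP Hy)).
Proof.
  unfold at_play.
  rewrite (@extend_eq _ _ (fun y => is_play g A P /\ lastset P y) _ b0 y (conj HP Hy)).
  f_equal. f_equal. now apply FPlay_eq.
Qed.

Lemma at_play_fplay phi b0 (x : fplay g A) :
  at_play phi b0 (fp_play x) (fp_pt x) = phi (cls x).
Proof. destruct x as [p a Hp Ha]. apply at_play_eq. Qed.

Lemma map_at_play phi b0 P HP (ts : list {y | lastset P y}) :
  map (at_play phi b0 P) (map (@proj1_sig _ _) ts) =
  map (fun y => phi (cls (@FPlay S g A P (proj1_sig y) HP (proj2_sig y)))) ts.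
Proof. rewrite map_map. apply map_ext. intros [y Hy]. apply at_play_eq. Qed.

Lemma rel_Gcom_play P HP {s} {ts : list {y | lastset P y}} :
  rel A s (map (@proj1_sig _ _) ts) ->
  rel (Gcom g A) s (map (fun y => cls (@FPlay S g A P (proj1_sig y) HP (proj2_sig y))) ts).
Proof.
  intro H. exists P, (map (fun y => FPlay (proj1_sig y) HP (proj2_sig y)) ts).
  split; [|split; rewrite map_map; [exact H|reflexivity]].
  apply Forall_map, Forall_forall. reflexivity.
Qed.

Section FromHom.
Variable h : hom (Gcom g A) B.

Definition strategy_of_hom : dstrategy g A B :=
  fun p a => proj1_sig h (cls (FPlay (proj1_sig a) (proj2_sig p) (proj2_sig a))).

Lemma hom_rel_play P HP {s} {ts : list {y | lastset P y}} :
  rel A s (map (@proj1_sig _ _) ts) ->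
  rel B s (map (fun y => proj1_sig h (cls (@FPlay S g A P (proj1_sig y) HP (proj2_sig y)))) ts).
Proof. intro H. rewrite <- map_map. exact (proj2_sig h s _ (rel_Gcom_play HP H)). Qed.

Lemma hom_rel_nullary s : rel A s [] -> rel B s [].
Proof. intro H. apply (proj2_sig h s []). exists [], []. repeat split; [constructor|exact H]. Qed.

Lemma at_play_rel b0 P s t : is_play g A P -> Forall (lastset P) t -> rel A s t ->
  rel B s (map (at_play (proj1_sig h) b0 P) t).
Proof.
  intros HP Ht Hr. destruct (Forall_sig Ht) as [ts <-].
  rewrite (map_at_play _ _ HP). exact (hom_rel_play HP Hr).
Qed.

Lemma at_play_sat_guard b0 p a : is_play g A p -> sat_guard A g a ->
  sat_guard B g (map (at_play (proj1_sig h) b0 (p ++ [fun y => In y a])) a).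
Proof.
  intros Hp Ha. set (P := p ++ [fun y => In y a]).
  assert (HP : is_play g A P) by (apply is_play_snoc; [exact Hp|exists a; auto]).
  assert (HPt : forall t, atom_tuple A t -> is_play g A (P ++ [fun y => In y t])).
  { intros t Ht. apply (is_play_snoc HP). exists t. split; [exact (sat_guard_atom g Ht)|auto]. }
  apply sat_guard_transfer with (ft := fun t => at_play (proj1_sig h) b0 (P ++ [fun y => In y t])).
  - intros t Ht. pose proof (HPt t Ht) as HPt'.
    destruct Ht as [[s Hs]|[x ->]]; [left|right].
    + exists s. apply at_play_rel; [exact HPt'| |exact Hs].
      rewrite lastset_snoc. now apply Forall_forall.
    + now eexists.
  - intros t x Ht Hxt Hxa.
    assert (Hx : lastset P x) by (unfold P; now rewrite lastset_snoc).
    assert (Hx' : lastset (P ++ [fun y => In y t]) x) by now rewrite lastset_snoc.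
    rewrite (at_play_eq _ _ x (HPt t Ht) Hx'), (at_play_eq _ _ x HP Hx).
    f_equal. symmetry. apply cls_snoc.
  - exact Ha.
Qed.

Lemma strategy_of_hom_guarded p :
  exists Y, guarded B g Y /\ forall a, Y (strategy_of_hom p a).
Proof.
  destruct p as [p Hp]. destruct (guarded_lastset Hp) as [a [Ha Hsub]].
  destruct a as [|y0 a'] eqn:Ea.
  - exists (fun _ => False). split; [|intros [x Hx]; exact (Hsub x Hx)].
    exists []. split; [exact (sat_guard_nil_transfer _ _ _ hom_rel_nullary Ha)|tauto].
  - rewrite <- Ea in *. set (P := p ++ [fun y => In y a]).
    assert (HP : is_play g A P) by (apply is_play_snoc; [exact Hp|exists a; auto]).
    assert (HPa : forall x, In x a -> lastset P x) by (unfold P; now rewrite lastset_snoc).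
    assert (Hy0 : In y0 a) by (rewrite Ea; now left).
    set (b0 := proj1_sig h (cls (FPlay y0 HP (HPa y0 Hy0)))).
    exists (fun b => In b (map (at_play (proj1_sig h) b0 P) a)).
    split.
    { exists (map (at_play (proj1_sig h) b0 P) a). split; [now apply at_play_sat_guard|auto]. }
    intros [x Hx]. cbn. unfold strategy_of_hom. cbn.
    rewrite (cls_snoc (fun y => In y a) x Hp HP Hx (HPa x (Hsub x Hx))), <- (at_play_eq _ b0).
    apply in_map. exact (Hsub x Hx).
Qed.

Lemma strategy_of_hom_winning : winning strategy_of_hom.
Proof.
  split.
  - intro p. split; [apply strategy_of_hom_guarded|]. intros s t. apply hom_rel_play.
  - intros [p Hp] [p' Hp'] X a Ha Ha' E. cbn in E. subst p'.
    unfold strategy_of_hom. cbn. f_equal. symmetry. apply cls_snoc.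
Qed.

End FromHom.

Section FromStrategy.
Variable st : dstrategy g A B.
Hypothesis st_winning : winning st.

Definition respond (x : fplay g A) : B :=
  st (exist _ (fp_play x) (fp_isplay x)) (exist _ (fp_pt x) (fp_foc x)).

Lemma respond_snoc p X a Hp Hp' Ha Ha' :
  respond (@FPlay S g A (p ++ [X]) a Hp' Ha') = respond (@FPlay S g A p a Hp Ha).
Proof. exact (proj2 st_winning (exist _ p Hp) (exist _ (p ++ [X]) Hp') X a Ha Ha' eq_refl). Qed.

Lemma respond_stays r u a Hr Hq Ha Hb : stays a r (r ++ u) ->
  respond (@FPlay S g A r a Hr Ha) = respond (@FPlay S g A (r ++ u) a Hq Hb).
Proof.
  revert Hq Hb. induction u as [|X u IH] using rev_ind; intros Hq Hb Hs.
  - f_equal. apply FPlay_eq; [symmetry; apply app_nil_r|reflexivity].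
  - assert (Hstep : prefix (r ++ u) (r ++ u ++ [X])) by (rewrite app_assoc; apply prefix_app).
    assert (Hru : is_play g A (r ++ u)).
    { apply (is_play_prefix Hq Hstep). exact (prefix_nonnil (prefix_app r u) (proj1 Hr)). }
    assert (Hrua : lastset (r ++ u) a) by exact (Hs _ (prefix_app r u) Hstep).
    assert (Hq' : is_play g A ((r ++ u) ++ [X])) by now rewrite <- app_assoc.
    assert (Hb' : lastset ((r ++ u) ++ [X]) a) by now rewrite <- app_assoc.
    rewrite (FPlay_eq Hq Hq' Hb Hb' (app_assoc r u [X]) eq_refl).
    rewrite (respond_snoc X a Hru Hq' Hrua Hb'). apply IH. exact (stays_prefix_r Hstep Hs).
Qed.

Lemma respond_fequiv x y : fequiv x y -> respond x = respond y.
Proof.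
  destruct x as [px a Hx Ha], y as [py b Hy Hb].
  intros [e [r [[[u1 E1] [[u2 E2] _]] [Hne [S1 S2]]]]]. cbn in *. subst px py b.
  assert (Hr : is_play g A r) by exact (is_play_prefix Hx (prefix_app r u1) Hne).
  assert (Hra : lastset r a) by exact (S1 r (prefix_refl r) (prefix_app r u1)).
  transitivity (respond (FPlay a Hr Hra)); [symmetry|]; now apply respond_stays.
Qed.

Definition hom_map_of_strategy (C : GU g A) : B :=
  respond (proj1_sig (constructive_indefinite_description _ (proj2_sig C))).

Lemma hom_map_of_strategy_cls x : hom_map_of_strategy (cls x) = respond x.
Proof.
  unfold hom_map_of_strategy. destruct (constructive_indefinite_description _ _) as [x' e].
  cbn in *. apply respond_fequiv. rewrite <- e. apply fequiv_refl.
Qed.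

Lemma respond_rel b0 P s t : is_play g A P -> Forall (lastset P) t -> rel A s t ->
  rel B s (map (at_play hom_map_of_strategy b0 P) t).
Proof.
  intros HP Ht Hr. destruct (Forall_sig Ht) as [ts <-].
  rewrite (map_at_play _ _ HP).
  replace (map _ ts) with (map (st (exist _ P HP)) ts).
  - exact (proj2 (proj1 st_winning (exist _ P HP)) s ts Hr).
  - apply map_ext. intros [y Hy]. now rewrite hom_map_of_strategy_cls.
Qed.

Lemma hom_map_of_strategy_hom :
  forall s t, rel (Gcom g A) s t -> rel B s (map hom_map_of_strategy t).
Proof.
  intros s t [p [xs [Hp [Hr ->]]]]. rewrite map_map.
  destruct xs as [|x0 xs'].
  - (* Without points [p] need not be a play; use the play whose only move is empty. *)
    assert (Hnil : is_play g A [fun _ => False]).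
    { split; [discriminate|]. repeat constructor.
      exists []. split; [exact (sat_guard_nil_of_rel A g s Hr)|tauto]. }
    exact (proj2 (proj1 st_winning (exist _ _ Hnil)) s [] Hr).
  - set (xs := x0 :: xs') in *. rewrite Forall_forall in Hp.
    assert (HP : is_play g A p) by (rewrite <- (Hp x0 (or_introl eq_refl)); apply fp_isplay).
    rewrite (map_ext_in _ (fun x => at_play hom_map_of_strategy (respond x0) p (fp_pt x)) xs).
    + rewrite <- map_map. apply respond_rel; [exact HP| |exact Hr].
      apply Forall_map, Forall_forall. intros x Hx. rewrite <- (Hp x Hx). apply fp_foc.
    + intros x Hx. now rewrite <- (Hp x Hx), at_play_fplay.
Qed.

End FromStrategy.

Definition to_strategy (h : hom (Gcom g A) B) : { st : dstrategy g A B | winning st } :=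
  exist _ (strategy_of_hom h) (strategy_of_hom_winning h).

Definition to_hom (w : { st : dstrategy g A B | winning st }) : hom (Gcom g A) B :=
  exist _ (hom_map_of_strategy (proj1_sig w)) (hom_map_of_strategy_hom (proj2_sig w)).

Lemma to_hom_to_strategy h : to_hom (to_strategy h) = h.
Proof.
  destruct h as [f Hf]. apply subset_eq_compat. apply functional_extensionality. intro C.
  destruct (GU_cls C) as [x ->].
  rewrite (hom_map_of_strategy_cls (strategy_of_hom_winning (exist _ f Hf))).
  now destruct x.
Qed.

Lemma to_strategy_to_hom w : to_strategy (to_hom w) = w.
Proof.
  destruct w as [st W]. apply subset_eq_compat.
  apply functional_extensionality_dep. intros [p Hp].
  apply functional_extensionality. intros [a Ha].
  exact (hom_map_of_strategy_cls W _).
Qed.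

End Correspondence.

Theorem theorem3p7 (S : signature) (g : guarding) (A B : structure S) :
  (exists F : hom (Gcom g A) B -> { st : dstrategy g A B | winning st },
     (exists F' : { st : dstrategy g A B | winning st } -> hom (Gcom g A) B,
        (forall h, F' (F h) = h) /\ (forall w, F (F' w) = w)) /\
     (forall (h : hom (Gcom g A) B) (p : play g A) (a : A)
             (ha : lastset (proj1_sig p) a),
        proj1_sig (F h) p (exist _ a ha) =
        proj1_sig h (cls (@FPlay S g A (proj1_sig p) a (proj2_sig p) ha)))) /\
  (simulates g A B <-> inhabited (hom (Gcom g A) B)).
Proof.
  split.
  - exists to_strategy. split; [|reflexivity].
    exists to_hom. split; [exact to_hom_to_strategy|exact to_strategy_to_hom].
  - split.
    + intros [st W]. exact (inhabits (to_hom (exist _ st W))).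
    + intros [h]. exists (strategy_of_hom h). exact (strategy_of_hom_winning h).
Qed.
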